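(* (1) If $m,n\in\mathbb{N}$, $m\neq n$, and $m/n$ is an integer power of a prime, then the homomorphism $\rho^{\mathbb{Z}}_{\{m,n\},\{m\}}\colon\mathbb{Z}[q]^{\{m,n\}}\to\mathbb{Z}[q]^{\{m\}}$ is not surjective. (2) If $m\mid n$ and $m\neq n$, then $\rho^{\mathbb{Z}}_{\langle n\rangle,\langle m\rangle}\colon\mathbb{Z}[q]^{\langle n\rangle}\to\mathbb{Z}[q]^{\langle m\rangle}$ is not surjective. (3) For each nonempty finite subset $S\subset\mathbb{N}$, the homomorphism $\rho^{\mathbb{Z}}_{\mathbb{N},S}\colon\mathbb{Z}[q]^{\mathbb{N}}\to\mathbb{Z}[q]^S$ is not surjective.
   Context: $q$ is an indeterminate, $\Phi_n(q)$ the $n$th cyclotomic polynomial. For $S\subset\mathbb{N}$, $\Phi_S^*$ is the multiplicative subset of $\mathbb{Z}[q]$ generated by $\{\Phi_k(q):k\in S\}$, directed by divisibility, and $\mathbb{Z}[q]^S=\varprojlim_{f\in\Phi_S^*}\mathbb{Z}[q]/(f)$; for $S'\subset S$, $\rho^{\mathbb{Z}}_{S,S'}$ is induced by the identity of $\mathbb{Z}[q]$. For $n\in\mathbb{N}$, $\langle n\rangle=\{k\in\mathbb{N}:k\mid n\}$, so $\mathbb{Z}[q]^{\langle n\rangle}=\varprojlim_j\mathbb{Z}[q]/(q^n-1)^j$. *)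

From HB Require Import structures.
From mathcomp Require Import all_boot all_order all_algebra all_field.
Set Implicit Arguments. Unset Strict Implicit. Unset Printing Implicit Defensive.
Import GRing.Theory Num.Theory.
Local Open Scope ring_scope.

(* Divisibility in Z[q] = {poly int} (genuine divisibility over Z, not up to
   scalars). *)
Definition zdvd (f g : {poly int}) : Prop := exists h : {poly int}, g = h * f.

Definition PhiStar (S : pred nat) (f : {poly int}) : Prop :=
  exists s : seq nat, all (fun k => k \in S) s /\ f = \prod_(k <- s) 'Phi_k.

(* An element of Z[q]^S = lim_{f in Phi_S^*} Z[q]/(f) is represented by a
   family a : f |-> a f of representatives of classes in Z[q]/(f) (only the
   values on Phi_S^* matter) which is compatible with the transition maps:
   f | g  ==>  a g = a f  mod f. *)
Definition compat (S : pred nat) (a : {poly int} -> {poly int}) : Prop :=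
  forall f g, PhiStar S f -> PhiStar S g -> zdvd f g -> zdvd f (a g - a f).

(* rho_{S,S'} (for S' a subset of S) sends the family a to its restriction to
   Phi_{S'}^*.  Two families represent the same element of Z[q]^{S'} iff they
   agree modulo every f in Phi_{S'}^*. *)
Definition rho_surjective (S S' : pred nat) : Prop :=
  forall b, compat S' b ->
    exists a, compat S a /\
      forall f, PhiStar S' f -> zdvd f (a f - b f).

Definition Nset : pred nat := fun k => (0 < k)%N.
Definition divset (n : nat) : pred nat := fun k => ((0 < k) && (k %| n))%N.

(* Suppose F is divisible by every Phi_j, j in S', so that 1 - F w is a unit of
   Z[q]^{S'} with inverse the geometric series in F w, and suppose Phi_m^s lies in
   the ideal (Phi_k, p) for some m in S', k in S.  A preimage of this inverse in
   Z[q]^S has a component c at Phi_k with (1 - F w) c = 1 modulo (Phi_k, Phi_m^N)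
   for all N, hence modulo (Phi_k, p^i) for all i, hence modulo Phi_k, as
   Z[q]/(Phi_k) is a free Z-module.  If moreover F and Phi_k have no common root,
   their resultant D = U F + V Phi_k is nonzero, and evaluating at a suitable
   multiple x of D gives an integer Phi_k(x) <> +-1 that divides 1 - F(x) w for
   some w, contradicting (1 - F(x) w) c(x) = 1 mod Phi_k(x).
   The congruence comes from Phi_{p^e n} = Phi_n^j mod p; F is Phi_m in (1) and
   q^N - 1 in (2) and (3). *)

From HB Require Import structures.
From mathcomp Require Import all_boot all_order all_algebra all_field.
From mathcomp Require Import ring zify.
Set Implicit Arguments.
Unset Strict Implicit.
Unset Printing Implicit Defensive.
Import GRing.Theory Num.Theory.
Local Open Scope ring_scope.

Lemma divisors_prime_mul (p n : nat) : prime p -> (0 < n)%N ->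
  perm_eq (divisors (p * n))
    ([seq (p * d)%N | d <- divisors n] ++ [seq d <- divisors n | ~~ (p %| d)%N]).
Proof.
move=> pp n0; have p0 := prime_gt0 pp.
apply: uniq_perm; first exact: divisors_uniq.
  have mulpI : injective (muln p) by move=> x y /eqP; rewrite eqn_pmul2l // => /eqP.
  rewrite cat_uniq (map_inj_uniq mulpI) filter_uniq divisors_uniq //= andbT.
  apply/hasPn => x; rewrite mem_filter => /andP[pNx _].
  by apply/mapP => -[d _ xd]; rewrite xd dvdn_mulr in pNx.
move=> e; rewrite mem_cat mem_filter -!dvdn_divisors ?muln_gt0 ?p0 //.
apply/idP/orP => [epn | [/mapP[d dn ->] | /andP[_ en]]].
- have [pe | pNe] := boolP (p %| e)%N.
    left; apply/mapP; exists (e %/ p)%N; last by rewrite mulnC divnK.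
    by rewrite -dvdn_divisors // -(dvdn_pmul2l p0) mulnC divnK.
  right; rewrite /= -(Gauss_dvdr n (_ : coprime e p)) //.
  by rewrite coprime_sym prime_coprime.
- by rewrite dvdn_pmul2l // dvdn_divisors.
- exact: dvdn_mull.
Qed.

Lemma Cyclotomic_comp_Xp (p n : nat) : prime p -> (0 < n)%N ->
  'Phi_n \Po 'X^p = 'Phi_(p * n) * (if (p %| n)%N then 1 else 'Phi_n).
Proof.
move=> pp; elim/ltn_ind: n => n IH n0.
pose cofactor d : {poly int} := if (p %| d)%N then 1 else 'Phi_d.
have cofactor_monic d : cofactor d \is monic.
  by rewrite /cofactor; case: ifP; rewrite ?monic1 ?Cyclotomic_monic.
have Eprod : \prod_(d <- divisors n) ('Phi_d \Po 'X^p) =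
             \prod_(d <- divisors n) ('Phi_(p * d) * cofactor d).
  rewrite -(rmorph_prod (comp_poly 'X^p)) /= prod_Cyclotomic //.
  rewrite comp_polyB comp_polyC (rmorphXn (comp_poly 'X^p)) /= comp_polyX -exprM.
  rewrite -prod_Cyclotomic; last by rewrite muln_gt0 prime_gt0 ?n0.
  rewrite (perm_big _ (divisors_prime_mul pp n0)) big_cat /= big_map big_filter.
  rewrite big_split /=; apply: congr1; rewrite big_mkcond /=.
  by apply: eq_bigr => d _; rewrite /cofactor; case: (p %| d)%N.
have nn : n \in divisors n by rewrite -dvdn_divisors.
move: Eprod; rewrite !(big_rem n nn) /=.
have -> : \prod_(d <- rem n (divisors n)) ('Phi_d \Po 'X^p) =
          \prod_(d <- rem n (divisors n)) ('Phi_(p * d) * cofactor d).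
  apply: eq_big_seq => d; rewrite mem_rem_uniq ?divisors_uniq // inE.
  case/andP => dNn; rewrite -dvdn_divisors // => dn.
  by apply: IH; [rewrite ltn_neqAle dNn dvdn_leq | exact: dvdn_gt0 dn].
apply: mulIf; apply/monic_neq0/monic_prod => d _.
by rewrite monicMl ?Cyclotomic_monic.
Qed.

Lemma comp_Xp_Fp (p : nat) (h : {poly 'F_p}) : prime p -> h \Po 'X^p = h ^+ p.
Proof.
move=> pp.
have pc : p \in [pchar {poly 'F_p}] by rewrite (rmorph_pchar polyC) ?pchar_Fp.
elim/poly_ind: h => [|h c IH]; first by rewrite comp_poly0 expr0n gtn_eqF ?prime_gt0.
rewrite comp_polyD comp_polyC comp_polyM comp_polyX IH.
rewrite -!(pFrobenius_autE pc) rmorphD rmorphM /= !(pFrobenius_autE pc) -rmorphXn.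
by rewrite -[X in c ^+ X](card_Fp pp) expf_card.
Qed.

Lemma Cyclotomic_pexp_modp (p e n : nat) : prime p -> (0 < n)%N ->
  exists2 j, (0 < j)%N &
    map_poly (intr : int -> 'F_p) 'Phi_(p ^ e * n) = (map_poly intr 'Phi_n) ^+ j.
Proof.
move=> pp n0; elim: e => [|e [j j0 IH]]; first by exists 1%N; rewrite ?mul1n.
set N := (p ^ e * n)%N.
have N0 : (0 < N)%N by rewrite muln_gt0 expn_gt0 prime_gt0.
pose modp := map_poly (intr : int -> 'F_p).
have := congr1 modp (Cyclotomic_comp_Xp pp N0); rewrite /modp.
rewrite map_comp_poly map_polyXn comp_Xp_Fp // rmorphM /= -/modp => E.
have PhiN_neq0 : modp 'Phi_N != 0 by rewrite monic_neq0 ?monic_map ?Cyclotomic_monic.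
have [j' j'0 Ej'] : exists2 j', (0 < j')%N & modp 'Phi_(p * N) = modp 'Phi_N ^+ j'.
  case: ifP E => _ E.
    by exists p; rewrite ?prime_gt0 // E /modp rmorph1 mulr1.
  exists p.-1; first by rewrite -subn1 subn_gt0 prime_gt1.
  by apply: (mulIf PhiN_neq0); rewrite -E -exprSr prednK ?prime_gt0.
exists (j * j')%N; first by rewrite muln_gt0 j0.
by rewrite expnS -mulnA -/N Ej' /modp IH exprM.
Qed.

Lemma int_poly_eq_modp (p : nat) (f g : {poly int}) : prime p ->
  map_poly (intr : int -> 'F_p) f = map_poly intr g ->
  exists H, f = g + p%:Z *: H.
Proof.
move=> pp Efg; set d := f - g.
have p_dvd_d : (p%:Z %| zcontents d)%Z.
  rewrite dvdz_contents; apply/polyOverP => i.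
  by rewrite (dvdz_pcharf (pchar_Fp pp)) -coef_map rmorphB /= Efg subrr coef0.
exists ((zcontents d %/ p)%Z *: zprimitive d).
by rewrite scalerA mulrC divzK // -zpolyEprim addrC subrK.
Qed.

Lemma Cyclotomic_pexp_ideal (p e m k : nat) : prime p -> (0 < m)%N -> (0 < k)%N ->
  (m = p ^ e * k \/ k = p ^ e * m)%N ->
  exists s G H, 'Phi_m ^+ s = 'Phi_k * G + p%:Z *: H.
Proof.
move=> pp m0 k0 [-> | ->].
  have [j j0 Ej] := Cyclotomic_pexp_modp e pp k0.
  have [H EH] := int_poly_eq_modp pp (etrans Ej (esym (rmorphXn _ _ _))).
  by exists 1%N, ('Phi_k ^+ j.-1), H; rewrite expr1 EH -exprS prednK.
have [j j0 Ej] := Cyclotomic_pexp_modp e pp m0.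
have [H EH] := int_poly_eq_modp pp (etrans (rmorphXn _ _ _) (esym Ej)).
by exists j, 1, H; rewrite mulr1.
Qed.

Lemma root_Cyclotomic_algC (n : nat) (z : algC) : (0 < n)%N ->
  root (map_poly intr 'Phi_n) z = n.-primitive_root z.
Proof.
move=> n0; have [w w_prim] := C_prim_root_exists n0.
by rewrite (Cintr_Cyclotomic w_prim) root_cyclotomic.
Qed.

Lemma int_poly_Bezout (F K : {poly int}) : (1 < size F)%N -> (1 < size K)%N ->
  (forall z : algC, root (map_poly intr F) z -> ~~ root (map_poly intr K) z) ->
  exists U V (D : int), D != 0 /\ D%:P = U * F + V * K.
Proof.
move=> F_nc K_nc no_common_root.
have [[U V] _ E] := resultant_in_ideal F_nc K_nc.
exists U, V, (resultant F K); split => //.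
rewrite resultant_eq0; set g := gcdp F K.
have root_of_multiple P : g %| P -> forall z : algC,
    root (map_poly intr g) z -> root (map_poly intr P) z.
  case/Pdiv.Idomain.dvdpP => -[c q] /= c0 Ec z gz.
  have := congr1 (fun r => (map_poly (intr : int -> algC) r).[z]) Ec.
  rewrite /= map_polyZ rmorphM /= hornerZ hornerM (rootP gz) mulr0.
  by move/eqP; rewrite mulf_eq0 intr_eq0 (negbTE c0).
apply/negP => g_nc.
have /closed_rootP[z gz] : size (map_poly (intr : int -> algC) g) != 1%N.
  by rewrite size_map_inj_poly ?rmorph0 //; [rewrite gtn_eqF | exact: intr_inj].
have := no_common_root z (root_of_multiple _ (Pdiv.Idomain.dvdp_gcdl F K) z gz).
by rewrite (root_of_multiple _ (Pdiv.Idomain.dvdp_gcdr F K) z gz).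
Qed.

Lemma zdvd_mulr (f g h : {poly int}) : zdvd f g -> zdvd f (g * h).
Proof. by case=> x ->; exists (x * h); rewrite mulrAC. Qed.

Lemma zdvd_mul (f1 f2 g1 g2 : {poly int}) :
  zdvd f1 g1 -> zdvd f2 g2 -> zdvd (f1 * f2) (g1 * g2).
Proof. by case=> x -> [y ->]; exists (x * y); ring. Qed.

Lemma PhiStar1 (S : pred nat) : PhiStar S 1.
Proof. by exists [::]; rewrite big_nil. Qed.

Lemma PhiStar_Phi (S : pred nat) k : S k -> PhiStar S 'Phi_k.
Proof. by move=> Sk; exists [:: k]; rewrite big_seq1 /= andbT. Qed.

Lemma PhiStarM (S : pred nat) f g : PhiStar S f -> PhiStar S g -> PhiStar S (f * g).
Proof.
case=> [s [Ss ->]] [t [St ->]].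
by exists (s ++ t); rewrite all_cat Ss St big_cat.
Qed.

Lemma PhiStarX (S : pred nat) f n : PhiStar S f -> PhiStar S (f ^+ n).
Proof.
move=> Sf; elim: n => [|n IH]; first exact: PhiStar1.
by rewrite exprS; apply: PhiStarM.
Qed.

Lemma monic_prod_Cyclotomic (s : seq nat) : \prod_(j <- s) 'Phi_j \is monic.
Proof. by apply: monic_prod => j _; apply: Cyclotomic_monic. Qed.

Lemma PhiStar_monic (S : pred nat) f : PhiStar S f -> f \is monic.
Proof. by case=> s [_ ->]; apply: monic_prod_Cyclotomic. Qed.

Lemma sum_expr_addn (R : pzSemiRingType) (x : R) n d :
  \sum_(i < n + d) x ^+ i = \sum_(i < n) x ^+ i + x ^+ n * \sum_(i < d) x ^+ i.
Proof.
rewrite big_split_ord big_distrr /=; congr (_ + _).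
by apply: eq_bigr => i _; rewrite exprD.
Qed.

Lemma exprD_mod (R : comPzRingType) (a c b : R) i :
  exists g, (a * c + b) ^+ i = g * a + b ^+ i.
Proof.
elim: i => [|i [g Eg]]; first by exists 0; rewrite !expr0 mul0r add0r.
by exists (g * (a * c + b) + b ^+ i * c); rewrite !exprSr Eg; ring.
Qed.

Lemma eq0_of_dvdz_pexp (p : nat) (c : int) : (1 < p)%N ->
  (forall i, (p%:Z ^+ i %| c)%Z) -> c = 0.
Proof.
move=> p1 dvd_c; apply/eqP; apply: contraT => c_neq0.
have c_gt0 : (0 < `|c|)%N by rewrite absz_gt0.
have := dvd_c `|c|%N; rewrite dvdzE abszX => /(dvdn_leq c_gt0).
by rewrite leqNgt ltn_expl.
Qed.

Lemma zdvd_of_congr_pexp (K X : {poly int}) (p : nat) : K \is monic -> (1 < p)%N ->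
  (forall i, exists u v, X = u * K + (p%:Z ^+ i)%:P * v) -> zdvd K X.
Proof.
move=> K_monic p1 congr_X.
have rem0 : Pdiv.CommonRing.rmodp X K = 0.
  apply/polyP => j; rewrite coef0; apply: (eq0_of_dvdz_pexp p1) => i.
  have [u [v ->]] := congr_X i.
  rewrite Pdiv.RingMonic.rmodpD // Pdiv.RingMonic.rmodp_mull // add0r mul_polyC.
  by rewrite Pdiv.RingMonic.rmodpZ // coefZ dvdz_mulr.
exists (Pdiv.CommonRing.rdivp X K).
by rewrite [LHS](Pdiv.RingMonic.rdivp_eq K_monic) rem0 addr0.
Qed.

(* The inverse of [1 - E] modulo [f]: truncating at [size f] suffices when [f]
   divides [E ^+ size f], which holds for [E] divisible by all the [Phi_j]
   occurring in [f] (PhiStar_zdvd_exp_size). *)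
Definition geom_family (E f : {poly int}) : {poly int} := \sum_(i < size f) E ^+ i.

Lemma mul_geom_family (E f : {poly int}) : (1 - E) * geom_family E f = 1 - E ^+ size f.
Proof. by rewrite -opprB mulNr -subrX1 opprB. Qed.

Section TopologicallyNilpotent.

Variables (S' : pred nat) (F : {poly int}).
Hypothesis F_nil : forall j, S' j -> (0 < j)%N /\ zdvd 'Phi_j F.

Lemma PhiStar_zdvd_exp_size f : PhiStar S' f -> zdvd f (F ^+ size f).
Proof.
case=> s [S's ->].
have [dvd_exp lt_size] : zdvd (\prod_(j <- s) 'Phi_j) (F ^+ size s) /\
                         (size s < size (\prod_(j <- s) 'Phi_j)%R)%N.
  elim: s S's => [|j s IH] /=.
    by rewrite big_nil expr0 size_poly1; split=> //; exists 1; rewrite mul1r.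
  case/andP => /F_nil[j0 Phi_j_dvd] /IH[dvd_exp lt_size].
  rewrite big_cons exprS; split; first exact: zdvd_mul.
  rewrite size_Mmonic ?monic_neq0 ?Cyclotomic_monic ?monic_prod_Cyclotomic //.
  rewrite size_Cyclotomic addSn /=.
  by apply: (leq_add (_ : 0 < totient j)%N lt_size); rewrite totient_gt0.
by rewrite -[size _](subnKC (ltnW lt_size)) exprD; apply: zdvd_mulr.
Qed.

Lemma compat_geom_family w : compat S' (geom_family (F * w)).
Proof.
move=> f g S'f S'g [h Eg]; rewrite /geom_family.
have g_monic := PhiStar_monic S'g.
have h_neq0 : h != 0.
  apply: contraTneq g_monic => h0.
  by rewrite Eg h0 mul0r monicE lead_coef0 eq_sym oner_eq0.
have le_fg : (size f <= size g)%N.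
  rewrite Eg size_Mmonic ?(PhiStar_monic S'f) //.
  by have := size_poly_gt0 h; rewrite h_neq0; lia.
rewrite -(subnKC le_fg) sum_expr_addn addrC addKr exprMn -mulrA.
by apply: zdvd_mulr; apply: PhiStar_zdvd_exp_size.
Qed.

Lemma lift_geom_family_inverse (S : pred nat) (a : {poly int} -> {poly int}) w
    (m k p : nat) :
  S' m -> S m -> S k -> (1 < p)%N ->
  (exists s G H, 'Phi_m ^+ s = 'Phi_k * G + p%:Z *: H) ->
  compat S a -> (forall f, PhiStar S' f -> zdvd f (a f - geom_family (F * w) f)) ->
  zdvd 'Phi_k ((1 - F * w) * a 'Phi_k - 1).
Proof.
move=> S'm Sm Sk p1 [s [G [H EPhi_m]]] a_compat a_lifts.
apply: zdvd_of_congr_pexp (Cyclotomic_monic k) p1 _ => i.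
set K := 'Phi_k; set E := F * w; set P := 'Phi_m ^+ (s * i).
have S'P : PhiStar S' P by apply/PhiStarX/PhiStar_Phi.
have SP : PhiStar S P by apply/PhiStarX/PhiStar_Phi.
have SK : PhiStar S K by apply: PhiStar_Phi.
have [h1 E1] := a_compat _ _ SK (PhiStarM SP SK) (ex_intro _ P erefl).
have [h2 E2] := a_compat _ _ SP (PhiStarM SP SK) (ex_intro _ K (mulrC _ _)).
have [h3 E3] := a_lifts P S'P.
have Ea : a K - geom_family E P = (h2 + h3) * P - h1 * K.
  by rewrite mulrDl -E1 -E2 -E3; ring.
have [g Eg] := exprD_mod K G (p%:Z *: H) i.
have EP : P = g * K + (p%:Z ^+ i)%:P * H ^+ i.
  by rewrite /P exprM EPhi_m Eg exprZn mul_polyC.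
have [x Ex] := PhiStar_zdvd_exp_size S'P.
(* Generalizing [size P] keeps the kernel from unfolding it when checking [ring]. *)
move: (size P) (mul_geom_family E P) Ex => n Eb Ex.
have -> : (1 - E) * a K - 1 =
          (1 - E) * (a K - geom_family E P) + ((1 - E) * geom_family E P - 1) by ring.
rewrite Ea Eb {2}/E exprMn Ex EP.
set c := (1 - E) * (h2 + h3) - x * w ^+ n.
by exists (c * g - (1 - E) * h1), (c * H ^+ i); rewrite /c; ring.
Qed.

End TopologicallyNilpotent.

Lemma exists_nonroot_mul (Q : {poly int}) (D : int) : Q != 0 -> D != 0 ->
  exists y, ~~ root Q (D * y).
Proof.
move=> Q0 D0; set xs := [seq D * i%:Z | i <- iota 0 (size Q)].
have xs_uniq : uniq xs.
  by rewrite map_inj_uniq ?iota_uniq // => i j /(mulfI D0) [].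
have : ~~ all (root Q) xs.
  apply: contraL (leqnn (size Q)) => all_roots; rewrite -ltnNge.
  by have := max_poly_roots Q0 all_roots xs_uniq; rewrite size_map size_iota.
by case/allPn => _ /mapP[i _ ->] nroot; exists i%:Z.
Qed.

Lemma horner_sub_horner0 (R : comNzRingType) (P : {poly R}) (x : R) :
  exists t, P.[x] = t * x + P.[0].
Proof.
have /factor_theorem[Q EQ] : root (P - P.[0]%:P) 0 by rewrite /root !hornerE subrr.
exists Q.[x]; have := congr1 (horner^~ x) EQ.
by rewrite /= !hornerE subr0 => <-; rewrite subrK.
Qed.

Lemma Cyclotomic_value_nonunit (k : nat) (F U V : {poly int}) (D : int) :
  (0 < k)%N -> D != 0 -> D%:P = U * F + V * 'Phi_k ->
  exists x w : int, ~~ (('Phi_k).[x] %| 1)%Z /\ (('Phi_k).[x] %| 1 - F.[x] * w)%Z.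
Proof.
move=> k0 D0 EBez; set eps := ('Phi_k).[0].
have [l El] : exists l, eps * l = -1.
  have := prod_Cyclotomic k0; rewrite (big_rem k) -?dvdn_divisors // => EXk.
  exists (\prod_(d <- rem k (divisors k)) 'Phi_d).[0].
  by rewrite /eps -hornerM EXk !hornerE expr0n gtn_eqF // sub0r.
have [y Hy] : exists y, ~~ root ('Phi_k ^+ 2 - 1) (D * y).
  apply: exists_nonroot_mul D0; rewrite subr_eq0; apply/eqP => E1.
  have := congr1 (fun q : {poly int} => size q) E1; rewrite /= size_poly1 expr2.
  rewrite size_Mmonic ?monic_neq0 ?Cyclotomic_monic // size_Cyclotomic.
  by have := totient_gt0 k; rewrite k0; lia.
(* As [x] is a multiple of [D], [Phi_k(x) = Phi_k(0) = +-1 mod D]: so [D], and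
   hence [F(x)] by the Bezout relation, is invertible modulo [Phi_k(x)]. *)
set x := D * y; set kap := ('Phi_k).[x].
have [t Et] : exists t, kap = D * t + eps.
  rewrite /kap; have [t' ->] := horner_sub_horner0 'Phi_k x.
  by exists (t' * y); rewrite /x mulrCA.
exists x, (U.[x] * t * l); split.
  rewrite dvdz1; apply: contra Hy => /eqP kap_unit.
  rewrite /root !hornerE -/kap subr_eq0.
  by rewrite -[kap ^+ 2]ger0_norm ?sqr_ge0 // -abszE abszX kap_unit.
apply/dvdzP; exists (V.[x] * t * l - l).
have EBx : D = U.[x] * F.[x] + V.[x] * kap.
  by have := congr1 (horner^~ x) EBez; rewrite /= !hornerE.
have -> : F.[x] * (U.[x] * t * l) = (D - V.[x] * kap) * t * l by rewrite EBx; ring.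
by rewrite -/kap -[1]opprK -El Et; ring.
Qed.

Lemma rho_not_surjective_of_congr (S S' : pred nat) (F : {poly int}) (m k p : nat) :
  (forall j, S' j -> (0 < j)%N /\ zdvd 'Phi_j F) -> (1 < size F)%N ->
  (forall z : algC, root (map_poly intr F) z -> ~~ k.-primitive_root z) ->
  S' m -> S m -> S k -> (0 < k)%N -> (1 < p)%N ->
  (exists s G H, 'Phi_m ^+ s = 'Phi_k * G + p%:Z *: H) ->
  ~ rho_surjective S S'.
Proof.
move=> F_nil F_nc F_coprime S'm Sm Sk k0 p1 Phi_congr.
have [U [V [D [D0 EBez]]]] : exists U V (D : int), D != 0 /\ D%:P = U * F + V * 'Phi_k.
  apply: int_poly_Bezout => // [|z]; first by rewrite size_Cyclotomic ltnS totient_gt0.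
  by rewrite root_Cyclotomic_algC //; apply: F_coprime.
have [x [w [kap_nunit kap_dvd]]] := Cyclotomic_value_nonunit k0 D0 EBez.
move=> /(_ _ (compat_geom_family F_nil w%:P)) [a [a_compat a_lifts]].
have [q Eq] := lift_geom_family_inverse F_nil S'm Sm Sk p1 Phi_congr a_compat a_lifts.
have Ex : (1 - F.[x] * w) * (a 'Phi_k).[x] - 1 = q.[x] * ('Phi_k).[x].
  by have := congr1 (horner^~ x) Eq; rewrite /= !hornerE.
have E1 : (1 - F.[x] * w) * (a 'Phi_k).[x] - q.[x] * ('Phi_k).[x] = 1.
  by rewrite -Ex; ring.
apply: (negP kap_nunit); rewrite -[X in (_ %| X)%Z]E1.
by apply: rpredB; [apply: dvdz_mulr | apply/dvdz_mull/dvdzz].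
Qed.

Lemma zdvd_Cyclotomic_Xn_sub1 (j N : nat) : (0 < N)%N -> (j %| N)%N ->
  zdvd 'Phi_j ('X^N - 1).
Proof.
move=> N0 jN; rewrite -prod_Cyclotomic // (big_rem j) -?dvdn_divisors //=.
by exists (\prod_(d <- rem j (divisors N)) 'Phi_d); rewrite mulrC.
Qed.

Lemma rho_not_surjective_Xn_sub1 (S S' : pred nat) (N m k p e : nat) :
  prime p -> (0 < N)%N -> (forall j, S' j -> (0 < j)%N /\ (j %| N)%N) ->
  S' m -> S m -> S k -> k = (p ^ e * m)%N -> ~~ (k %| N)%N ->
  ~ rho_surjective S S'.
Proof.
move=> pp N0 S'_dvd S'm Sm Sk Ek kNN.
have [m0 _] := S'_dvd m S'm.
have k0 : (0 < k)%N by rewrite Ek muln_gt0 expn_gt0 prime_gt0.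
apply: (@rho_not_surjective_of_congr _ _ ('X^N - 1) m k p) => //.
- by move=> j /S'_dvd[j0 jN]; split; last exact: zdvd_Cyclotomic_Xn_sub1.
- by rewrite -polyC1 size_XnsubC // ltnS.
- move=> z; rewrite rmorphB rmorph1 /= map_polyXn /root !hornerE subr_eq0 => /eqP zN.
  by apply: contra kNN => zk; rewrite (prim_order_dvd zk) zN.
- exact: prime_gt1.
- exact: Cyclotomic_pexp_ideal pp m0 k0 (or_intror Ek).
Qed.

Lemma rat_ratio_pexp (p m n : nat) (e : int) : prime p -> (0 < n)%N ->
  (m%:R / n%:R : rat) = p%:R ^ e -> exists e', (m = p ^ e' * n \/ n = p ^ e' * m)%N.
Proof.
move=> pp n0 Emn.
have n_neq0 : (n%:R : rat) != 0 by rewrite pnatr_eq0 -lt0n.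
have p_neq0 : (p%:R : rat) != 0 by rewrite pnatr_eq0 -lt0n prime_gt0.
have {Emn} Em : (m%:R : rat) = p%:R ^ e * n%:R by rewrite -Emn divfK.
case: e Em => j Em; [exists j; left | exists j.+1; right];
  apply/eqP; rewrite -(eqr_nat rat) natrM natrX Em //.
by rewrite mulrA mulfV ?expf_neq0 ?mul1r.
Qed.

Lemma rho_not_surjective_pair (m n : nat) : (0 < m)%N -> (0 < n)%N -> m <> n ->
  (exists (p : nat) (e : int), prime p /\ (m%:R / n%:R : rat) = (p%:R : rat) ^ e) ->
  ~ rho_surjective (fun k => (k == m) || (k == n)) (fun k => k == m).
Proof.
move=> m0 n0 mn [p [e [pp Emn]]].
have [e' Hmn] := rat_ratio_pexp pp n0 Emn.
apply: (@rho_not_surjective_of_congr _ _ 'Phi_m m n p) => //=.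
- by move=> j /eqP->; split=> //; exists 1; rewrite mul1r.
- by rewrite size_Cyclotomic ltnS totient_gt0.
- move=> z; rewrite root_Cyclotomic_algC // => zm; apply/negP => zn; apply: mn.
  apply/eqP; rewrite eqn_dvd (prim_order_dvd zn) (prim_expr_order zm).
  by rewrite (prim_order_dvd zm) (prim_expr_order zn) eqxx.
- by rewrite eqxx.
- by rewrite eqxx orbT.
- exact: prime_gt1.
- exact: Cyclotomic_pexp_ideal pp m0 n0 Hmn.
Qed.

Lemma rho_not_surjective_divset (m n : nat) :
  (0 < m)%N -> (0 < n)%N -> (m %| n)%N -> m <> n ->
  ~ rho_surjective (divset n) (divset m).
Proof.
move=> m0 n0 /dvdnP[q Enq] m_neq_n.
have q_gt1 : (1 < q)%N.
  by move: n0 m_neq_n; case: q Enq => [|[|q]] -> //; rewrite mul1n.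
have pp := pdiv_prime q_gt1.
apply: (@rho_not_surjective_Xn_sub1 _ _ m m _ _ 1 pp m0) => //.
- by move=> j /andP.
- by rewrite /divset /= m0 dvdnn.
- by rewrite /divset /= m0 Enq dvdn_mull.
- rewrite /divset /= muln_gt0 expn_gt0 prime_gt0 // m0 Enq.
  by rewrite dvdn_pmul2r // expn1 pdiv_dvd.
- by rewrite expn1 -{2}(mul1n m) dvdn_pmul2r // dvdn1 gtn_eqF ?prime_gt1.
Qed.

Lemma rho_not_surjective_finite (s : seq nat) : s <> [::] -> all (fun k => 0 < k)%N s ->
  ~ rho_surjective Nset (fun k => k \in s).
Proof.
case: s => [//|m s] _ s_pos.
set N := (\prod_(j <- m :: s) j)%N.
have N0 : (0 < N)%N.
  by rewrite /N big_seq_cond prodn_cond_gt0 // => j /andP[/(allP s_pos)].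
have m0 : (0 < m)%N by case/andP: s_pos.
apply: (@rho_not_surjective_Xn_sub1 _ _ N m (2 ^ N * m) 2 N) => //.
- by move=> j js; rewrite (allP s_pos) // /N (big_rem j js) dvdn_mulr.
- exact: mem_head.
- by rewrite /Nset muln_gt0 expn_gt0 m0.
- apply/negP => /(dvdn_leq N0); rewrite leqNgt; apply/negP/negPn.
  exact: leq_trans (ltn_expl N (isT : 1 < 2)%N) (leq_pmulr _ m0).
Qed.

Theorem proposition7p7 :
  (* (1) *)
  (forall m n : nat, (0 < m)%N -> (0 < n)%N -> m <> n ->
     (exists (p : nat) (e : int), prime p /\
        (m%:R / n%:R : rat) = (p%:R : rat) ^ e) ->
     ~ rho_surjective (fun k => (k == m) || (k == n)) (fun k => k == m))
  /\
  (* (2) *)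
  (forall m n : nat, (0 < m)%N -> (0 < n)%N -> (m %| n)%N -> m <> n ->
     ~ rho_surjective (divset n) (divset m))
  /\
  (* (3) *)
  (forall s : seq nat, s <> [::] -> all (fun k => 0 < k)%N s ->
     ~ rho_surjective Nset (fun k => k \in s)).
Proof.
split; first exact: rho_not_surjective_pair.
split; first exact: rho_not_surjective_divset.
exact: rho_not_surjective_finite.
Qed.
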